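(* As formal power series in $z$ with integer coefficients, $$\Psi^2(z)=\frac{1}{1+z}\sum_{s\ge0}\ \sum_{k_1>k_2>\dots>k_s\ge0}3^s\prod_{j=1}^{s}\frac{z^{3^{k_j}}\bigl(1+z^{3^{k_j}}\bigr)}{1+z^{3^{k_j+1}}},$$ where the term for $s=0$ is interpreted as $1$. In particular $\Psi^2(z)\equiv \frac{1}{1+z}$ modulo $3$ (coefficientwise).
   Context: $\Psi(z)=\prod_{j\ge0}\bigl(1+z^{3^j}\bigr)=\sum_{k\ge0}\sum_{n_1>\dots>n_k\ge0}z^{3^{n_1}+\dots+3^{n_k}}$, a formal power series with coefficients in $\{0,1\}$. Rational functions such as $1/(1+z)$ are expanded as power series in $z$. For integral power series $f,g$, ''$f=g$ modulo $3^e$'' means all coefficients of $f-g$ are divisible by $3^e$. *)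

(* Formal power series with integer coefficients are
   represented by their coefficient functions nat -> int. *)
From HB Require Import structures.
From mathcomp Require Import all_boot all_order all_algebra.
Set Implicit Arguments. Unset Strict Implicit. Unset Printing Implicit Defensive.
Import Order.TTheory GRing.Theory Num.Theory.
Local Open Scope ring_scope.

Definition series := nat -> int.

Definition smul (f g : series) : series :=
  fun n => \sum_(i < n.+1) f i * g (n - i)%N.

Definition sone : series := fun n => (n == 0)%:R.

Definition sXn (m : nat) : series := fun n => (n == m)%:R.

Definition s1pXn (m : nat) : series := fun n => (n == 0)%:R + (n == m)%:R.

(* expansion of 1/(1+z^m) as a power series (m > 0):
   sum_{j>=0} (-1)^j z^(m j) *)
Definition sinv1pXn (m : nat) : series :=
  fun n => if (m %| n)%N then (-1) ^+ (n %/ m) else 0.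

(* Psi(z) = sum_{k>=0} sum_{n_1>...>n_k>=0} z^(3^n_1+...+3^n_k):
   coefficient of z^n counts finite sets S of exponents with sum_{j in S} 3^j = n.
   Such S necessarily satisfy S ⊆ {0..n} (as 3^j > n for j > n), so the
   count is taken over subsets of 'I_n.+1. *)
Definition Psi : series :=
  fun n => \sum_(S : {set 'I_n.+1}) ((\sum_(j in S) 3 ^ (val j))%N == n)%:R.

Definition Tk (k : nat) : series :=
  smul (smul (sXn (3 ^ k)) (s1pXn (3 ^ k))) (sinv1pXn (3 ^ k.+1)).

Definition prodT (N : nat) (K : {set 'I_N}) : series :=
  \big[smul/sone]_(k in K) Tk (val k).

(* sum_{s>=0} sum_{k_1>...>k_s>=0} 3^s prod_j T_{k_j}, i.e. the sum over all
   finite sets K of naturals of 3^|K| prod_{k in K} T_k.  The family is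
   summable: T_k has order 3^k, so for coefficient n only K ⊆ {0..n}
   contribute (3^k > n for k > n); the coefficient is therefore the finite
   sum over K : {set 'I_n.+1}. *)
Definition bigSum : series :=
  fun n => \sum_(K : {set 'I_n.+1}) (3%:Z ^+ #|K|) * prodT K n.

From HB Require Import structures.
From mathcomp Require Import all_boot all_order all_algebra.
From mathcomp Require Import boolp functions.
From mathcomp Require Import ring zify.
Import Order.TTheory GRing.Theory Num.Theory.
Set Implicit Arguments. Unset Strict Implicit. Unset Printing Implicit Defensive.
Local Open Scope ring_scope.

(* Proof of Lemma 2.1.  Write X^m for z^m and put
     Q_N = prod_(j<N) (1 + X^(3^j)),    R_N = prod_(j<N) (1 + 3 T_j).
   Since T_k (1 + X^(3^(k+1))) = X^(3^k) (1 + X^(3^k)), expanding the cube gives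
     (1 + X^(3^k))^3 = (1 + X^(3^(k+1))) (1 + 3 T_k),
   and multiplying over k < N telescopes to
     (1 + X) Q_N^2 = (1 + X^(3^N)) R_N.
   Both Psi and the series bigSum are infinite products whose k-th factor only
   involves powers X^i with i > k, so up to degree n they agree with Q_N and R_N
   as soon as N > n; and in degree n < 3^N the factor 1 + X^(3^N) is invisible.
   Dividing by 1 + X gives the identity, and R_N = 1 + 3 (...) gives the
   congruence. *)

HB.instance Definition _ := GRing.Zmodule.copy series (nat -> int).

Lemma coefSD (f g : series) n : (f + g) n = f n + g n. Proof. by []. Qed.

Definition agree (n : nat) (f g : nat -> int) := forall j, (j <= n)%N -> f j = g j.

Definition coefs (p : {poly int}) : nat -> int := fun j => p`_j.

Definition trunc (f : series) (n : nat) : {poly int} := \poly_(i < n.+1) f i.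

Lemma agree_trunc f n : agree n (coefs (trunc f n)) f.
Proof. by move=> j jn; rewrite /coefs coef_poly ltnS jn. Qed.
Arguments agree_trunc : clear implicits.

Lemma agree_coefsM f g p q n :
  agree n (coefs p) f -> agree n (coefs q) g -> agree n (coefs (p * q)) (smul f g).
Proof.
move=> Ep Eq j jn; rewrite /coefs coefM; apply: eq_bigr => i _.
have ij : (i <= j)%N by rewrite -ltnS ltn_ord.
congr (_ * _); [exact: Ep (leq_trans ij jn) | exact: Eq (leq_trans (leq_subr _ _) jn)].
Qed.

(* The ring laws of series are inherited from those of polynomials. *)
Lemma smulA : associative smul.
Proof.
move=> f g h; apply: funext => n.
have Efg_h := agree_coefsM (agree_coefsM (agree_trunc f n) (agree_trunc g n))
                           (agree_trunc h n).
have Ef_gh := agree_coefsM (agree_trunc f n)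
                           (agree_coefsM (agree_trunc g n) (agree_trunc h n)).
by rewrite -Efg_h // -Ef_gh // /coefs mulrA.
Qed.

Lemma smulC : commutative smul.
Proof.
move=> f g; apply: funext => n.
rewrite -(agree_coefsM (agree_trunc f n) (agree_trunc g n)) //.
by rewrite -(agree_coefsM (agree_trunc g n) (agree_trunc f n)) // /coefs mulrC.
Qed.

Lemma smul1 : left_id sone smul.
Proof.
move=> f; apply: funext => n.
have E1 : agree n (coefs 1) sone by move=> j _; rewrite /coefs coef1.
by rewrite -(agree_coefsM E1 (agree_trunc f n)) // /coefs mul1r; apply: agree_trunc.
Qed.

Lemma smulDl : left_distributive smul +%R.
Proof.
move=> f g h; apply: funext => n.
have Efg : agree n (coefs (trunc f n + trunc g n)) (f + g).
  by move=> j jn; rewrite /coefs coefD; congr (_ + _); apply: agree_trunc.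
rewrite -(agree_coefsM Efg (agree_trunc h n)) // coefSD.
rewrite -(agree_coefsM (agree_trunc f n) (agree_trunc h n)) //.
by rewrite -(agree_coefsM (agree_trunc g n) (agree_trunc h n)) // /coefs mulrDl coefD.
Qed.

Lemma sone_neq0 : sone != 0.
Proof. by apply/eqP => /(congr1 (fun f : series => f 0%N)). Qed.

HB.instance Definition _ :=
  GRing.Zmodule_isComNzRing.Build series smulA smulC smul1 smulDl sone_neq0.

Lemma coefS1 n : (1 : series) n = (n == 0)%:R. Proof. by []. Qed.
Lemma coefSM (f g : series) n : (f * g) n = \sum_(k < n.+1) f k * g (n - k)%N.
Proof. by []. Qed.

Lemma coefSMn (f : series) k n : (f *+ k) n = f n *+ k.
Proof. by elim: k => [|k IH]; rewrite ?mulr0n // !mulrS coefSD IH. Qed.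

Lemma coefS_natM (f : series) k n : ((k%:R : series) * f) n = k%:R * f n.
Proof. by rewrite !mulr_natl coefSMn. Qed.

Lemma coefS_sum (I : finType) (P : pred I) (F : I -> series) n :
  (\sum_(i | P i) F i) n = \sum_(i | P i) F i n.
Proof. exact: (big_morph (fun f : series => f n) (fun f g => coefSD f g n) (erefl _)). Qed.

Lemma agreeM n (f f' g g' : series) :
  agree n f f' -> agree n g g' -> agree n (f * g) (f' * g').
Proof.
move=> Ef Eg j jn; rewrite !coefSM; apply: eq_bigr => i _.
have ij : (i <= j)%N by rewrite -ltnS ltn_ord.
by rewrite Ef ?Eg ?(leq_trans (leq_subr _ _) jn) ?(leq_trans ij jn).
Qed.

Lemma coef_XnM m (f : series) n :
  (sXn m * f) n = if (m <= n)%N then f (n - m)%N else 0.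
Proof.
rewrite coefSM /sXn; case: leqP => [mn|nm].
  rewrite (bigD1 (Ordinal (mn : (m < n.+1)%N))) //= eqxx mul1r big1 ?addr0 // => i ne.
  by rewrite (_ : (val i == m) = false) ?mul0r //; apply: contraNF ne => /eqP e; apply/eqP/val_inj.
by rewrite big1 // => i _; rewrite ltn_eqF ?mul0r // (leq_trans (ltn_ord i) nm).
Qed.

Lemma sXnD : {morph sXn : x y / (x + y)%N >-> x * y}.
Proof.
move=> a b; apply: funext => n; rewrite coef_XnM /sXn; case: leqP => an.
  by rewrite (_ : (n - a == b)%N = (n == a + b)%N) //; apply/eqP/eqP; lia.
by rewrite (_ : (n == a + b)%N = false) //; apply/eqP; lia.
Qed.

Lemma sXn0 : sXn 0 = 1. Proof. by []. Qed.

Lemma sinv1pXnK m : (0 < m)%N -> (1 + sXn m) * sinv1pXn m = 1.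
Proof.
move=> m0; apply: funext => n; rewrite mulrDl mul1r coefSD coef_XnM coefS1 /sinv1pXn.
case: leqP => [mn|nm].
  rewrite -(subnK mn) addnK dvdn_addl // (_ : (n - m + m == 0)%N = false); last first.
    by apply/eqP; lia.
  by case: ifP => // _; rewrite divnDr // divnn m0 exprD expr1 mulrN1 addNr.
case: n nm => [|n] nm; first by rewrite dvdn0 div0n expr0 addr0.
by rewrite (_ : (m %| n.+1)%N = false) ?addr0 //; apply/negP => /(dvdn_leq (ltn0Sn n)); rewrite leqNgt nm.
Qed.

Lemma agree_mul1D n (f g : series) : agree n g 0 -> agree n (f * (1 + g)) f.
Proof.
move=> g0 j jn; rewrite mulrDr mulr1 coefSD coefSM big1 ?addr0 // => i _.
by rewrite g0 ?mulr0 // (leq_trans (leq_subr _ _) jn).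
Qed.

Section StableProduct.
Variable G : nat -> series.
Hypothesis G_order : forall k, agree k (G k) 0.

Lemma prod_agree n M N : (n < M)%N -> (M <= N)%N ->
  agree n (\prod_(k < N) (1 + G k)) (\prod_(k < M) (1 + G k)).
Proof.
move=> nM; elim: N => [|N IH]; first by rewrite leqn0 => /eqP->.
rewrite leq_eqVlt ltnS => /predU1P[->//|MN] j jn.
rewrite big_ord_recr /= (@agree_mul1D n) ?IH // => i iN.
by apply: G_order; rewrite (leq_trans iN) // ltnW // (leq_trans nM).
Qed.

End StableProduct.

Lemma three_pow_gt k : (k < 3 ^ k)%N.
Proof. exact: ltn_expl. Qed.

(* Since 3^k > k, the factors X^(3^k) and T_k of Psi and bigSum have no terms
   of degree <= k, as required by prod_agree. *)
Lemma sXn_pow3_order k : agree k (sXn (3 ^ k)) 0.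
Proof. by move=> i ik; rewrite /sXn ltn_eqF // (leq_ltn_trans ik (three_pow_gt k)). Qed.

Lemma Tk_order k : agree k (Tk k) 0.
Proof.
move=> i ik; rewrite /Tk -[smul (smul _ _) _]/(sXn _ * s1pXn _ * _) -mulrA coef_XnM.
by rewrite leqNgt (leq_ltn_trans ik (three_pow_gt k)).
Qed.

Definition Q (N : nat) : series := \prod_(k < N) (1 + sXn (3 ^ k)).
Definition R (N : nat) : series := \prod_(k < N) (1 + 3%:R * Tk k).

Lemma Psi_Q n : Psi n = Q n.+1 n.
Proof.
rewrite /Q (eq_bigr _ (fun k _ => addrC _ _)) bigA_distr coefS_sum /Psi.
apply: eq_bigr => S _; rewrite -big_mkcond /= -(big_morph _ sXnD sXn0) /sXn eq_sym //.
Qed.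

(* Expanding R_(n+1) (each factor contributing 1 or 3 T_k) yields the
   coefficient of bigSum. *)
Lemma bigSum_R n : bigSum n = R n.+1 n.
Proof.
rewrite /R (eq_bigr _ (fun k _ => addrC _ _)) bigA_distr coefS_sum /bigSum.
apply: eq_bigr => K _; rewrite -big_mkcond /= big_split /= prodr_const.
by rewrite -natrX coefS_natM natrX.
Qed.

Lemma Psi_agree n N : (n < N)%N -> agree n Psi (Q N).
Proof.
move=> nN j jn; rewrite Psi_Q /Q (prod_agree sXn_pow3_order (ltnSn j)) //.
exact: leq_ltn_trans jn nN.
Qed.

Lemma bigSum_agree n N : (n < N)%N -> agree n bigSum (R N).
Proof.
move=> nN j jn; have T3_order k : agree k (3%:R * Tk k) 0.
  by move=> i ik; rewrite coefS_natM Tk_order ?mulr0.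
by rewrite bigSum_R /R (prod_agree T3_order (ltnSn j)) // (leq_ltn_trans jn nN).
Qed.

Lemma cube_identity k :
  (1 + sXn (3 ^ k)) ^+ 3 = (1 + sXn (3 ^ k.+1)) * (1 + 3%:R * Tk k).
Proof.
have sXn_cube : sXn (3 ^ k.+1) = sXn (3 ^ k) ^+ 3.
  by rewrite expnS (_ : (3 * 3 ^ k = 3 ^ k + 3 ^ k + 3 ^ k)%N) ?sXnD; [ring | lia].
have Tk_mul : (1 + sXn (3 ^ k.+1)) * Tk k = sXn (3 ^ k) * (1 + sXn (3 ^ k)).
  rewrite [Tk k]/(sXn _ * (1 + sXn _) * sinv1pXn _) mulrCA sinv1pXnK ?mulr1 //.
  exact: expn_gt0.
rewrite mulrDr mulr1 mulrCA Tk_mul sXn_cube; ring.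
Qed.

Lemma telescope N : (1 + sXn 1) * (Q N * Q N) = (1 + sXn (3 ^ N)) * R N.
Proof.
elim: N => [|N IH]; first by rewrite /Q /R !big_ord0 !mulr1.
rewrite /Q /R !big_ord_recr /= -/(Q N) -/(R N).
transitivity ((1 + sXn 1) * (Q N * Q N) * (1 + sXn (3 ^ N)) ^+ 2); first by ring.
rewrite IH; transitivity (R N * (1 + sXn (3 ^ N)) ^+ 3); first by ring.
by rewrite cube_identity; ring.
Qed.

Lemma R_mod3 N : exists S : series, R N = 1 + 3%:R * S.
Proof.
elim: N => [|N [S IH]]; first by exists 0; rewrite /R big_ord0; ring.
exists (S + Tk N + 3%:R * S * Tk N).
by rewrite /R big_ord_recr /= -/(R N) IH; ring.
Qed.

Lemma QQ_R n N : (n < 3 ^ N)%N -> (Q N * Q N) n = (sinv1pXn 1 * R N) n.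
Proof.
move=> nN; have -> : Q N * Q N = sinv1pXn 1 * ((1 + sXn 1) * (Q N * Q N)).
  by rewrite mulrA [sinv1pXn 1 * _]mulrC sinv1pXnK // mul1r.
rewrite telescope mulrDl mul1r mulrDr coefSD mulrCA coef_XnM.
by rewrite leqNgt nN addr0.
Qed.

Theorem lemma2p1 :
  (forall n : nat, smul Psi Psi n = smul (sinv1pXn 1) bigSum n) /\
  (forall n : nat, (3 %| (smul Psi Psi n - sinv1pXn 1 n))%Z).
Proof.
have n_lt_3pow n : (n < 3 ^ n.+1)%N by exact: ltn_trans (ltnSn n) (three_pow_gt _).
have PsiPsi n : smul Psi Psi n = (sinv1pXn 1 * R n.+1) n.
  rewrite -QQ_R ?n_lt_3pow //.
  exact: agreeM (Psi_agree (ltnSn n)) (Psi_agree (ltnSn n)) _ (leqnn n).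
have invR n : smul (sinv1pXn 1) bigSum n = (sinv1pXn 1 * R n.+1) n.
  exact: agreeM (fun j _ => erefl (sinv1pXn 1 j)) (bigSum_agree (ltnSn n)) _ (leqnn n).
split=> n; rewrite PsiPsi; first by rewrite invR.
have [S ->] := R_mod3 n.+1.
rewrite mulrDr mulr1 coefSD addrC addKr mulrCA coefS_natM.
by apply/dvdzP; exists ((sinv1pXn 1 * S) n); rewrite mulrC.
Qed.
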